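(* Let $u$ be a quasi-definite linear functional on $\mathbb C[\boldsymbol x]$, let $\boldsymbol x_1,\dots,\boldsymbol x_q\in\mathbb R^D$ be distinct, $\xi_1,\dots,\xi_q\in\mathbb C$, and $\hat u=u+\sum_{i=1}^q\xi_i\delta(\boldsymbol x-\boldsymbol x_i)$ (i.e. $\langle\hat u,P\rangle=\langle u,P\rangle+\sum_i\xi_iP(\boldsymbol x_i)$), assumed quasi-definite. Let $M$ be the $q\times q$ matrix with entries $M_{ij}=\delta_{ij}+\xi_iK_{n-1}(\boldsymbol x_i,\boldsymbol x_j)$. Then for $n\ge1$ $$\hat P_{[n]}(\boldsymbol x)=\Theta_*\begin{pmatrix}M&\begin{matrix}\xi_1K_{n-1}(\boldsymbol x_1,\boldsymbol x)\\ \vdots\\ \xi_qK_{n-1}(\boldsymbol x_q,\boldsymbol x)\end{matrix}\\ \begin{matrix}P_{[n]}(\boldsymbol x_1)&\cdots&P_{[n]}(\boldsymbol x_q)\end{matrix}&P_{[n]}(\boldsymbol x)\end{pmatrix},\qquad \hat H_{[n]}=\Theta_*\begin{pmatrix}M&\begin{matrix}-\xi_1P_{[n]}(\boldsymbol x_1)^\top\\ \vdots\\ -\xi_qP_{[n]}(\boldsymbol x_q)^\top\end{matrix}\\ \begin{matrix}P_{[n]}(\boldsymbol x_1)&\cdots&P_{[n]}(\boldsymbol x_q)\end{matrix}&H_{[n]}\end{pmatrix}.$$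
   Context: Multi-indices ordered by graded lexicographic order; $\chi(\boldsymbol x)$ the semi-infinite vector of monomials with blocks $\chi_{[k]}$. For a linear functional $u$ on $\mathbb C[\boldsymbol x]$, moment matrix $G=\langle u,\chi\chi^\top\rangle$; quasi-definite: all block truncations nonsingular; then $G=S^{-1}HS^{-\top}$, $S$ block lower unitriangular, $H$ block diagonal with blocks $H_{[k]}$; $P=S\chi$ with blocks $P_{[k]}$ (column vectors of polynomials) are the monic orthogonal polynomials; hats refer to $\hat u$. $K_{n-1}(\boldsymbol x,\boldsymbol y)=\sum_{m=0}^{n-1}P_{[m]}(\boldsymbol x)^\top H_{[m]}^{-1}P_{[m]}(\boldsymbol y)$. Last quasi-determinant: $\Theta_*\begin{pmatrix}A&B\\C&D\end{pmatrix}=D-CA^{-1}B$. *)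

From HB Require Import structures.
From mathcomp Require Import all_boot all_order all_algebra.
From mathcomp Require Import mpoly.
Set Implicit Arguments.
Unset Strict Implicit.
Unset Printing Implicit Defensive.
Import Order.TTheory GRing.Theory Num.Theory.
Local Open Scope ring_scope.

Section Defs.
Variable C : numClosedFieldType.   (* the complex numbers (any such field) *)
Variable D : nat.

(* Graded lexicographic order inside a block of fixed total degree:
   a comes before b iff at the first coordinate where they differ, a_i > b_i
   (so x_1 > x_2 > ... > x_D). *)
Definition lex_before (a b : 'X_{1..D}) : bool :=
  [exists i : 'I_D, (b i < a i)%N && [forall j : 'I_D, (j < i)%N ==> (a j == b j)]].

Definition mons (k : nat) : seq 'X_{1..D} :=
  sort (fun a b => (a == b) || lex_before a b)
    [seq val m | m <- enum {: 'X_{1..D < k.+1}} & mdeg (val m) == k].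

Definition N (k : nat) : nat := size (mons k).

Definition mon (k : nat) (i : 'I_(N k)) : 'X_{1..D} := nth 0%MM (mons k) i.

Definition chi (k : nat) : 'cV[{mpoly C[D]}]_(N k) := \col_(i < N k) 'X_[mon i].

Definition lin_functional (u : {mpoly C[D]} -> C) : Prop :=
  forall (a : C) (p r : {mpoly C[D]}), u (a *: p + r) = a * u p + u r.

(* block (k,l) of the moment matrix G = <u, chi chi^T> *)
Definition Gblock (u : {mpoly C[D]} -> C) (k l : nat) : 'M[C]_(N k, N l) :=
  \matrix_(i < N k, j < N l) u ('X_[mon i] * 'X_[mon j]).

Definition Gtrunc (u : {mpoly C[D]} -> C) (n : nat) :=
  \mxblock_(i < n.+1, j < n.+1) Gblock u i j.

Definition quasi_definite (u : {mpoly C[D]} -> C) : Prop :=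
  forall n : nat, Gtrunc u n \in unitmx.

(* Gauss--Borel factorization G = S^{-1} H S^{-T}, written as S G S^T = H,
   with S block lower unitriangular (blocks S k l) and H block diagonal
   (diagonal blocks H k). *)
Definition gauss_borel (u : {mpoly C[D]} -> C)
    (S : forall k l : nat, 'M[C]_(N k, N l)) (H : forall k : nat, 'M[C]_(N k)) : Prop :=
  [/\ forall k, S k k = 1%:M,
      forall k l, (k < l)%N -> S k l = 0,
      forall k l, k != l ->
        \sum_(a < k.+1) \sum_(b < l.+1) S k a *m Gblock u a b *m (S l b)^T = 0
    & forall k,
        \sum_(a < k.+1) \sum_(b < k.+1) S k a *m Gblock u a b *m (S k b)^T = H k].

Definition Pol (S : forall k l : nat, 'M[C]_(N k, N l)) (k : nat)
    : 'cV[{mpoly C[D]}]_(N k) :=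
  \col_(i < N k) \sum_(a < k.+1) \sum_(j < N a) S k a i j *: 'X_[mon j].

Definition evP (S : forall k l : nat, 'M[C]_(N k, N l)) (k : nat) (x : 'I_D -> C)
    : 'cV[C]_(N k) := map_mx (fun p => p.@[x]) (Pol S k).

(* Kn1 S H n x y = K_{n-1}(x,y) = sum_{m=0}^{n-1} P_[m](x)^T H_[m]^{-1} P_[m](y) *)
Definition Kn1 (S : forall k l : nat, 'M[C]_(N k, N l)) (H : forall k : nat, 'M[C]_(N k))
    (n : nat) (x y : 'I_D -> C) : C :=
  \sum_(m < n) ((evP S m x)^T *m invmx (H m) *m evP S m y) 0 0.

Definition uvarov (u : {mpoly C[D]} -> C) (q : nat) (xi : 'I_q -> C)
    (pts : 'I_q -> 'I_D -> C) (p : {mpoly C[D]}) : C :=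
  u p + \sum_(i < q) xi i * p.@[pts i].

End Defs.

Definition Theta_star (R : comUnitRingType) (q r s : nat)
    (A : 'M[R]_q) (B : 'M[R]_(q, s)) (Cm : 'M[R]_(r, q)) (Dm : 'M[R]_(r, s))
    : 'M[R]_(r, s) := Dm - Cm *m invmx A *m B.

From HB Require Import structures.
From mathcomp Require Import all_boot all_order all_algebra.
From mathcomp Require Import mpoly.
From mathcomp Require Import ring.
Set Implicit Arguments.
Unset Strict Implicit.
Unset Printing Implicit Defensive.
Import Order.TTheory GRing.Theory Num.Theory.
Local Open Scope ring_scope.

(* Since û differs from u only by point evaluations at the x_i, we look for P̂_[n] in the
   form P_[n] - sum_i c_i xi_i K_{n-1}(x_i, .).  By the reproducing property of K_{n-1},
   such a polynomial is û-orthogonal to every polynomial of degree < n as soon as its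
   values at the x_i are the c_i, i.e. as soon as c M = (P_[n](x_i))_i; uniqueness of monic
   û-orthogonal polynomials then identifies it with P̂_[n].  The same computation with
   P_[n] replaced by 0 shows, by quasi-definiteness of û, that c M = 0 forces c = 0, so M
   is invertible.  Finally Ĥ_[n] is read off from <û, P̂_[n] P_[n]^T>. *)

Section Monomials.
Variables D k : nat.

Lemma mons_uniq : uniq (mons D k).
Proof.
rewrite /mons sort_uniq map_inj_uniq; last exact: val_inj.
by rewrite filter_uniq // enum_uniq.
Qed.

Lemma mem_mons (m : 'X_{1..D}) : (m \in mons D k) = (mdeg m == k).
Proof.
rewrite /mons mem_sort; apply/mapP/idP => [[m' + ->]|/eqP mdeg_m].
  by rewrite mem_filter => /andP[].
have lt_m : (mdeg m < k.+1)%N by rewrite mdeg_m.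
by exists (BMultinom lt_m); rewrite // mem_filter /= mdeg_m eqxx mem_enum.
Qed.

Lemma mdeg_mon (i : 'I_(N D k)) : mdeg (mon i) = k.
Proof. by apply/eqP; rewrite -mem_mons /mon mem_nth. Qed.

Lemma mon_inj : injective (@mon D k).
Proof.
by move=> i j /eqP; rewrite /mon nth_uniq ?mons_uniq // => /eqP/val_inj.
Qed.

Lemma monP (m : 'X_{1..D}) : mdeg m = k -> exists i : 'I_(N D k), mon i = m.
Proof.
move=> mdeg_m; have m_in : m \in mons D k by rewrite mem_mons mdeg_m.
by exists (Ordinal (etrans (index_mem _ _) m_in)); rewrite /mon /= nth_index.
Qed.

End Monomials.

Section LowDegree.
Variables (R : nzRingType) (D : nat).

(* [msize p] is the total degree of [p] plus one: this is the space of polynomials of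
   degree < k. *)
Definition msize_le (k : nat) : {pred {mpoly R[D]}} := fun p => (msize p <= k)%N.

Lemma msize_leE k p : (p \in msize_le k) = (msize p <= k)%N.
Proof. by []. Qed.

Fact msize_le_submod_closed k : subsemimod_closed (msize_le k).
Proof.
split; first split=> [|p q]; rewrite ?msize_leE ?msize0 //.
  by move=> p_le q_le; rewrite (leq_trans (msizeD_le _ _)) // geq_max p_le.
by move=> c p p_le; rewrite msize_leE (leq_trans (msizeZ_le _ _)).
Qed.

HB.instance Definition _ k :=
  GRing.isSubmodClosed.Build R {mpoly R[D]} (msize_le k) (msize_le_submod_closed k).

Lemma msize_leX k (m : 'X_{1..D}) : (mdeg m < k)%N -> 'X_[m] \in msize_le k.
Proof. by rewrite msize_leE msizeX. Qed.

Lemma msize_leW k l (p : {mpoly R[D]}) :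
  (k <= l)%N -> p \in msize_le k -> p \in msize_le l.
Proof. by rewrite !msize_leE => kl /leq_trans; apply. Qed.

Lemma mcoeff_msize_le k (p : {mpoly R[D]}) (m : 'X_{1..D}) :
  p \in msize_le k -> (k <= mdeg m)%N -> p@_m = 0.
Proof.
rewrite msize_leE => p_le k_le; apply/eqP; rewrite mcoeff_eq0.
by apply: msize_mdeg_ge; exact: leq_trans k_le.
Qed.

Lemma msize_le_expand k (p : {mpoly R[D]}) : p \in msize_le k ->
  p = \sum_(a < k) \sum_(i < N D a) p@_(mon i) *: 'X_[mon i].
Proof.
move=> p_le; apply/mpolyP => m; rewrite raddf_sum /=.
under eq_bigr do rewrite raddf_sum /=.
under eq_bigr do under eq_bigr do rewrite mcoeffZ mcoeffX.
have [mk|km] := ltnP (mdeg m) k; last first.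
  rewrite (mcoeff_msize_le p_le km) big1 // => a _; rewrite big1 // => i _.
  rewrite (_ : mon i == m = false) ?mulr0 //; apply/negbTE/eqP => im.
  by move: km; rewrite -im mdeg_mon leqNgt ltn_ord.
rewrite (bigD1 (Ordinal mk)) //= [X in _ + X]big1 ?addr0 => [|a am]; last first.
  rewrite big1 // => i _; rewrite (_ : mon i == m = false) ?mulr0 //.
  by apply/negbTE/eqP => im; move: am; rewrite -val_eqE /= -im mdeg_mon eqxx.
have [i0 i0m] := @monP D (mdeg m) m erefl.
rewrite (bigD1 i0) //= [X in _ + X]big1 ?addr0 => [|i ii0]; last first.
  by rewrite -[X in _ == X]i0m (inj_eq (@mon_inj _ _)) (negbTE ii0) mulr0.
by rewrite i0m eqxx mulr1.
Qed.

End LowDegree.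

Section LinearFunctionals.
Variables (C : numClosedFieldType) (D : nat).
Implicit Types (w : {mpoly C[D]} -> C) (p g : {mpoly C[D]}).

Lemma lin_functional0 w : lin_functional w -> w 0 = 0.
Proof.
move=> w_lin; have := w_lin 1 0 0; rewrite scaler0 addr0 mul1r => w0.
by apply: (addrI (w 0)); rewrite addr0 -w0.
Qed.

Lemma lin_functionalD w p g : lin_functional w -> w (p + g) = w p + w g.
Proof. by move=> w_lin; have := w_lin 1 p g; rewrite scale1r mul1r. Qed.

Lemma lin_functionalZ w a p : lin_functional w -> w (a *: p) = a * w p.
Proof. by move=> w_lin; rewrite -[a *: p]addr0 w_lin lin_functional0 ?addr0. Qed.

Lemma lin_functionalB w p g : lin_functional w -> w (p - g) = w p - w g.
Proof. by move=> w_lin; rewrite lin_functionalD // -scaleN1r lin_functionalZ // mulN1r. Qed.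

Lemma lin_functional_sum w (I : Type) (r : seq I) (P : pred I) (F : I -> {mpoly C[D]}) :
  lin_functional w -> w (\sum_(i <- r | P i) F i) = \sum_(i <- r | P i) w (F i).
Proof.
move=> w_lin; apply: (big_morph w) => [p g|]; first exact: lin_functionalD.
exact: lin_functional0.
Qed.

Lemma lin_functional_mull w g : lin_functional w -> lin_functional (fun p => w (g * p)).
Proof. by move=> w_lin a p h; rewrite mulrDr -scalerAr w_lin. Qed.

Lemma lin_functional_sub_meval w x :
  lin_functional w -> lin_functional (fun p => w p - p.@[x]).
Proof. by move=> w_lin a p h; rewrite w_lin mevalD mevalZ; ring. Qed.

Lemma lin_functional_uvarov u q (xi : 'I_q -> C) (pts : 'I_q -> 'I_D -> C) :
  lin_functional u -> lin_functional (uvarov u xi pts).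
Proof.
move=> u_lin a p h; rewrite /uvarov u_lin mulrDr mulr_sumr.
under eq_bigr do rewrite mevalD mevalZ mulrDr mulrCA.
by rewrite big_split /=; ring.
Qed.

End LinearFunctionals.

Definition pol (C : numClosedFieldType) (D : nat) (S : forall k l : nat, 'M[C]_(N D k, N D l))
    (k : nat) (r : 'I_(N D k)) : {mpoly C[D]} :=
  Pol S k r 0.
Arguments pol {C D} S k r.

Section MonicBasis.
Variables (C : numClosedFieldType) (D : nat) (S : forall k l : nat, 'M[C]_(N D k, N D l)).
Variable H : forall k : nat, 'M[C]_(N D k).
Hypothesis S_diag : forall k, S k k = 1%:M.

Lemma polE k r : pol S k r = \sum_(a < k.+1) \sum_(j < N D a) S k a r j *: 'X_[mon j].
Proof. by rewrite /pol mxE. Qed.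

Lemma meval_pol k r x : (pol S k r).@[x] = evP S k x r 0.
Proof. by rewrite /evP mxE. Qed.

Lemma pol_split k r :
  pol S k r = 'X_[mon r] + \sum_(a < k) \sum_(j < N D a) S k a r j *: 'X_[mon j].
Proof.
rewrite polE big_ord_recr /= addrC S_diag (bigD1 r) //= big1 ?addr0 => [|j /negbTE jr].
  by rewrite mxE eqxx scale1r.
by rewrite mxE eq_sym jr scale0r.
Qed.

Lemma msize_le_lower_pol k r :
  \sum_(a < k) \sum_(j < N D a) S k a r j *: 'X_[mon j] \in msize_le k.
Proof.
by apply/rpred_sum => a _; apply/rpred_sum => j _; apply/rpredZ/msize_leX; rewrite mdeg_mon.
Qed.

Lemma msize_pol k r : pol S k r \in msize_le k.+1.
Proof.
rewrite pol_split rpredD ?msize_leX ?mdeg_mon //.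
by apply: (msize_leW (leqnSn k)); apply: msize_le_lower_pol.
Qed.

Lemma msize_pol_subX k r : pol S k r - 'X_[mon r] \in msize_le k.
Proof. by rewrite pol_split addrC addKr msize_le_lower_pol. Qed.

Lemma mcoeff_pol_top k r s : (pol S k r)@_(mon s) = (r == s)%:R.
Proof.
rewrite pol_split mcoeffD mcoeffX (inj_eq (@mon_inj _ _)).
by rewrite (mcoeff_msize_le (msize_le_lower_pol r)) ?addr0 ?mdeg_mon.
Qed.

Lemma lin_functional_pol_eq0 (w : {mpoly C[D]} -> C) k : lin_functional w ->
  (forall l (s : 'I_(N D l)), (l < k)%N -> w (pol S l s) = 0) ->
  {in msize_le k, forall p, w p = 0}.
Proof.
move=> w_lin w_pol p /msize_le_expand ->; rewrite lin_functional_sum //.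
suff w_mon a : (a < k)%N -> forall i : 'I_(N D a), w 'X_[mon i] = 0.
  by rewrite big1 // => a _; rewrite lin_functional_sum // big1 // => i _;
     rewrite lin_functionalZ // w_mon ?mulr0.
elim/ltn_ind: a => a IH ak i.
have -> : 'X_[mon i] = pol S a i - \sum_(b < a) \sum_(j < N D b) S a b i j *: 'X_[mon j].
  by rewrite pol_split addrK.
rewrite lin_functionalB // w_pol // lin_functional_sum // big1 ?subr0 // => b _.
rewrite lin_functional_sum // big1 // => j _.
by rewrite lin_functionalZ // IH ?mulr0 // (ltn_trans _ ak).
Qed.

Definition kernel_pol n (y : 'I_D -> C) : {mpoly C[D]} :=
  \sum_(l < n) \sum_(s < N D l) ((evP S l y)^T *m invmx (H l)) 0 s *: pol S l s.

Lemma meval_kernel_pol n y x : (kernel_pol n y).@[x] = Kn1 S H n y x.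
Proof.
rewrite /kernel_pol /Kn1 (big_morph _ (mevalD x) (meval0 x)); apply: eq_bigr => l _.
rewrite (big_morph _ (mevalD x) (meval0 x)) mxE; apply: eq_bigr => s _.
by rewrite mevalZ meval_pol.
Qed.

Lemma msize_kernel_pol n y : kernel_pol n y \in msize_le n.
Proof.
apply/rpred_sum => l _; apply/rpred_sum => s _; apply/rpredZ.
by apply: (msize_leW (ltn_ord l)); apply: msize_pol.
Qed.

End MonicBasis.

Lemma msize_pol_sub (C : numClosedFieldType) (D : nat)
    (S1 S2 : forall k l : nat, 'M[C]_(N D k, N D l)) k r :
  (forall k, S1 k k = 1%:M) -> (forall k, S2 k k = 1%:M) ->
  pol S1 k r - pol S2 k r \in msize_le k.
Proof.
move=> S1_diag S2_diag.
have -> : pol S1 k r - pol S2 k r = (pol S1 k r - 'X_[mon r]) - (pol S2 k r - 'X_[mon r]).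
  by rewrite opprB addrA subrK.
by rewrite rpredB //; apply: msize_pol_subX.
Qed.

Section OrthogonalPolynomials.
Variables (C : numClosedFieldType) (D : nat) (w : {mpoly C[D]} -> C).
Variables (S : forall k l : nat, 'M[C]_(N D k, N D l)) (H : forall k : nat, 'M[C]_(N D k)).
Hypotheses (w_lin : lin_functional w) (w_qd : quasi_definite w) (wSH : gauss_borel w S H).

Let S_diag : forall k, S k k = 1%:M. Proof. by case: wSH. Qed.

Lemma pol_moment k l r s : w (pol S k r * pol S l s) =
  (\sum_(a < k.+1) \sum_(b < l.+1) S k a *m Gblock w a b *m (S l b)^T) r s.
Proof.
rewrite !polE mulr_suml lin_functional_sum // summxE.
apply: eq_bigr => a _; rewrite summxE mulr_suml lin_functional_sum //.
under eq_bigr => j _ do rewrite mulr_sumr lin_functional_sum //.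
under [RHS]eq_bigr => b _ do rewrite mxE.
under [RHS]eq_bigr => b _ do under eq_bigr => j' _ do rewrite !mxE big_distrl /=.
under [RHS]eq_bigr => b _ do rewrite exchange_big /=.
rewrite [RHS]exchange_big /=; apply: eq_bigr => j _.
apply: eq_bigr => b _; rewrite mulr_sumr lin_functional_sum //; apply: eq_bigr => j' _.
by rewrite -scalerAl -scalerAr scalerA lin_functionalZ // !mxE; ring.
Qed.

Lemma pol_moment_off k l r s : k != l -> w (pol S k r * pol S l s) = 0.
Proof. by case: wSH => _ _ S_off _ kl; rewrite pol_moment S_off // mxE. Qed.

Lemma pol_moment_diag k r s : w (pol S k r * pol S k s) = H k r s.
Proof. by case: wSH => _ _ _ S_diagH; rewrite pol_moment S_diagH. Qed.

Lemma pol_orth k r h : h \in msize_le k -> w (pol S k r * h) = 0.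
Proof.
apply: (lin_functional_pol_eq0 S_diag (lin_functional_mull _ w_lin)) => l s lk.
by rewrite pol_moment_off // neq_ltn lk orbT.
Qed.

Lemma quasi_definite_orth_eq0 k f : f \in msize_le k ->
  (forall g, g \in msize_le k -> w (f * g) = 0) -> f = 0.
Proof.
case: k => [|k] f_le f_orth; first by apply/eqP; rewrite -msize_poly_eq0 -leqn0.
pose c : 'rV[C]_(\sum_(a < k.+1) N D a) :=
  \mxrow_(a < k.+1) (\row_(i < N D a) f@_(mon i)).
have c0 : c = 0.
  (* [c] lies in the left kernel of the invertible truncated moment matrix. *)
  rewrite -[c](mulmxK (w_qd k)) [c *m _](_ : _ = 0) ?mul0mx //.
  rewrite /Gtrunc mul_mxrow_mxblock -[RHS]mxrow0; apply: eq_mxrow => b; apply/rowP => j.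
  rewrite summxE mxE -[RHS](f_orth 'X_[mon j]) ?msize_leX ?mdeg_mon //.
  rewrite [in RHS](msize_le_expand f_le) mulr_suml lin_functional_sum //.
  apply: eq_bigr => a _; rewrite mxE mulr_suml lin_functional_sum //.
  by apply: eq_bigr => i _; rewrite -scalerAl lin_functionalZ // !mxE.
rewrite (msize_le_expand f_le) big1 // => a _; rewrite big1 // => i _.
have := congr1 (fun M => submxrow M a) c0; rewrite mxrowK submxrow0 => /rowP/(_ i).
by rewrite !mxE => ->; rewrite scale0r.
Qed.

Lemma unitmx_H k : H k \in unitmx.
Proof.
rewrite unitmxE unitfE; apply/det0P => -[v /eqP v_neq0 vH0]; apply: v_neq0.
pose f := \sum_(r < N D k) v 0 r *: pol S k r.
have f0 : f = 0.
  apply: (@quasi_definite_orth_eq0 k.+1).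
    by apply/rpred_sum => r _; apply/rpredZ/msize_pol.
  apply: (lin_functional_pol_eq0 S_diag (lin_functional_mull _ w_lin)) => l s lk.
  rewrite mulr_suml lin_functional_sum //.
  have [kl|kl] := eqVneq k l; last first.
    by rewrite big1 // => r _; rewrite -scalerAl lin_functionalZ // pol_moment_off ?mulr0.
  subst l; have := congr1 (fun A : 'rV_(N D k) => A 0 s) vH0; rewrite !mxE => vHs.
  rewrite -[RHS]vHs; apply: eq_bigr => r _.
  by rewrite -scalerAl lin_functionalZ // pol_moment_diag.
apply/rowP => s; have := congr1 (mcoeff (mon s)) f0.
rewrite raddf_sum mcoeff0 mxE => <-; rewrite (bigD1 s) //= big1 ?addr0 => [|r rs].
  by rewrite mcoeffZ mcoeff_pol_top // eqxx mulr1.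
by rewrite mcoeffZ mcoeff_pol_top // (negbTE rs) mulr0.
Qed.

Lemma kernel_pol_reproducing n y f : f \in msize_le n -> w (kernel_pol S H n y * f) = f.@[y].
Proof.
move=> f_le; apply/eqP; rewrite -subr_eq0; apply/eqP; move: f f_le.
have w_lin' := lin_functional_sub_meval y (lin_functional_mull (kernel_pol S H n y) w_lin).
apply: (lin_functional_pol_eq0 S_diag w_lin').
move=> l t lt_ln /=; rewrite meval_pol /kernel_pol mulr_suml lin_functional_sum //.
rewrite (bigD1 (Ordinal lt_ln)) //= [X in _ + X - _]big1 ?addr0 => [|l' l'l]; last first.
  rewrite mulr_suml lin_functional_sum // big1 // => s _.
  by rewrite -scalerAl lin_functionalZ // pol_moment_off ?mulr0.
rewrite mulr_suml lin_functional_sum //.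
under eq_bigr do rewrite -scalerAl lin_functionalZ // pol_moment_diag.
have := congr1 (fun A : 'rV_(N D l) => A 0 t) (mulmxKV (unitmx_H l) (evP S l y)^T).
by rewrite !mxE => <-; rewrite subrr.
Qed.

End OrthogonalPolynomials.

Section UvarovPerturbation.
Variables (C : numClosedFieldType) (D : nat) (u : {mpoly C[D]} -> C).
Variables (q : nat) (xi : 'I_q -> C) (pts : 'I_q -> 'I_D -> C).
Variables (S Sh : forall k l : nat, 'M[C]_(N D k, N D l)) (H Hh : forall k : nat, 'M[C]_(N D k)).
Hypotheses (u_lin : lin_functional u) (u_qd : quasi_definite u) (uSH : gauss_borel u S H).
Hypotheses (uh_qd : quasi_definite (uvarov u xi pts)) (uhSH : gauss_borel (uvarov u xi pts) Sh Hh).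
Variable n : nat.

Local Notation uh := (uvarov u xi pts).
Local Notation K := (kernel_pol S H n).

Let S_diag : forall k, S k k = 1%:M. Proof. by case: uSH. Qed.

Let uh_lin : lin_functional uh. Proof. exact: lin_functional_uvarov. Qed.

Definition uvarov_mx : 'M[C]_q :=
  \matrix_(i < q, j < q) ((i == j)%:R + xi i * Kn1 S H n (pts i) (pts j)).

Lemma uvarov_mxE :
  uvarov_mx = 1%:M + \matrix_(i < q, j < q) (xi i * Kn1 S H n (pts i) (pts j)).
Proof. by apply/matrixP => i j; rewrite !mxE. Qed.

Definition pol_pts : 'M[C]_(N D n, q) := \matrix_(r < N D n, i < q) evP S n (pts i) r 0.

Definition kernel_comb (c : 'rV[C]_q) : {mpoly C[D]} :=
  \sum_(i < q) (c 0 i * xi i) *: K (pts i).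

Lemma msize_kernel_comb c : kernel_comb c \in msize_le n.
Proof. by apply/rpred_sum => i _; apply/rpredZ/msize_kernel_pol. Qed.

Lemma meval_kernel_comb c j : (kernel_comb c).@[pts j] = (c *m uvarov_mx) 0 j - c 0 j.
Proof.
rewrite uvarov_mxE mulmxDr mulmx1 mxE addrAC subrr add0r.
rewrite (big_morph _ (mevalD _) (meval0 _)) mxE.
by apply: eq_bigr => i _; rewrite mevalZ meval_kernel_pol mxE mulrA.
Qed.

Lemma uvarov_orth_sub_kernel_comb g0 c :
  (forall g, g \in msize_le n -> u (g0 * g) = 0) ->
  (forall j, (c *m uvarov_mx) 0 j = g0.@[pts j]) ->
  forall g, g \in msize_le n -> uh ((g0 - kernel_comb c) * g) = 0.
Proof.
move=> g0_orth cM g g_le; rewrite /uvarov.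
under [X in _ + X]eq_bigr do rewrite mevalM mevalB meval_kernel_comb cM.
rewrite mulrBl lin_functionalB // g0_orth // /kernel_comb mulr_suml lin_functional_sum //.
under [X in 0 - X]eq_bigr do rewrite -scalerAl lin_functionalZ // kernel_pol_reproducing //.
by rewrite sub0r -sumrN -big_split big1 // => i _ /=; ring.
Qed.

Lemma unitmx_uvarov_mx : uvarov_mx \in unitmx.
Proof.
rewrite unitmxE unitfE; apply/det0P => -[v /eqP v_neq0 vM0]; apply: v_neq0.
have vM j : (v *m uvarov_mx) 0 j = (0 : {mpoly C[D]}).@[pts j] by rewrite vM0 meval0 mxE.
have h0 : 0 - kernel_comb v = 0.
  apply: (@quasi_definite_orth_eq0 _ _ _ uh_lin uh_qd n).
  - by rewrite rpredB ?rpred0 ?msize_kernel_comb.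
  - by apply: uvarov_orth_sub_kernel_comb vM => g _; rewrite mul0r lin_functional0.
apply/rowP => j; have := congr1 (meval (pts j)) h0.
by rewrite mevalB meval_kernel_comb vM !meval0 mxE !sub0r opprK.
Qed.

Definition uvarov_coef : 'M[C]_(N D n, q) := pol_pts *m invmx uvarov_mx.

Lemma uvarov_coef_mx r : row r uvarov_coef *m uvarov_mx = row r pol_pts.
Proof. by rewrite -row_mul mulmxKV ?unitmx_uvarov_mx. Qed.

Lemma uvarov_pol r : pol Sh n r = pol S n r - kernel_comb (row r uvarov_coef).
Proof.
have [Sh_diag _ _ _] := uhSH.
apply/eqP; rewrite -subr_eq0; apply/eqP.
apply: (@quasi_definite_orth_eq0 _ _ _ uh_lin uh_qd n).
  by rewrite opprB addrCA rpredD ?msize_kernel_comb //; apply: msize_pol_sub.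
move=> g g_le; rewrite mulrBl lin_functionalB // (pol_orth uh_lin uhSH) // sub0r.
rewrite (uvarov_orth_sub_kernel_comb (g0 := pol S n r)) ?oppr0 // => [h h_le|j].
  by apply: (pol_orth u_lin uSH).
by rewrite uvarov_coef_mx meval_pol /pol_pts !mxE.
Qed.

Lemma meval_uvarov_pol_pts r j : (pol Sh n r).@[pts j] = uvarov_coef r j.
Proof.
rewrite uvarov_pol mevalB meval_kernel_comb uvarov_coef_mx meval_pol /pol_pts !mxE.
by rewrite opprB addrC subrK.
Qed.

Lemma uvarov_pol_Theta x :
  evP Sh n x = Theta_star uvarov_mx (\matrix_(i < q, j < 1) (xi i * Kn1 S H n (pts i) x))
                 pol_pts (evP S n x).
Proof.
apply/colP => r; rewrite -[evP Sh _ _ _ _]meval_pol uvarov_pol mevalB meval_pol.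
rewrite /Theta_star -/uvarov_coef [RHS]mxE [X in _ = _ + X]mxE; congr (_ - _).
rewrite (big_morph _ (mevalD _) (meval0 _)) mxE; apply: eq_bigr => i _.
by rewrite mevalZ meval_kernel_pol !mxE mulrA.
Qed.

Lemma uvarov_H_Theta :
  Hh n = Theta_star uvarov_mx (\matrix_(i < q, s < N D n) (- (xi i * evP S n (pts i) s 0)))
           pol_pts (H n).
Proof.
have [Sh_diag _ _ _] := uhSH.
apply/matrixP => r s.
have uh_r_s : Hh n r s = uh (pol Sh n r * pol S n s).
  have -> : pol Sh n r * pol S n s =
            pol Sh n r * pol Sh n s - pol Sh n r * (pol Sh n s - pol S n s) by ring.
  rewrite lin_functionalB // (pol_moment_diag uh_lin uhSH) (pol_orth uh_lin uhSH) ?subr0 //.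
  exact: msize_pol_sub.
have u_r_s : u (pol Sh n r * pol S n s) = H n r s.
  have -> : pol Sh n r * pol S n s =
            pol S n s * (pol Sh n r - pol S n r) + pol S n r * pol S n s by ring.
  rewrite lin_functionalD // (pol_orth u_lin uSH) ?add0r ?(pol_moment_diag u_lin uSH) //.
  exact: msize_pol_sub.
rewrite uh_r_s /uvarov u_r_s /Theta_star -/uvarov_coef.
rewrite [RHS]mxE [X in _ = _ + X]mxE mxE -sumrN.
congr (_ + _); apply: eq_bigr => j _.
by rewrite mevalM meval_uvarov_pol_pts meval_pol !mxE; ring.
Qed.

End UvarovPerturbation.

Theorem mainTheorem16 (C : numClosedFieldType) (D : nat)
    (u : {mpoly C[D]} -> C) (q : nat) (xi : 'I_q -> C) (pts : 'I_q -> 'I_D -> C)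
    (S : forall k l : nat, 'M[C]_(N D k, N D l)) (H : forall k : nat, 'M[C]_(N D k))
    (Sh : forall k l : nat, 'M[C]_(N D k, N D l)) (Hh : forall k : nat, 'M[C]_(N D k)) :
  lin_functional u ->
  quasi_definite u ->
  injective pts ->
  (forall i j, pts i j \is Num.real) ->
  quasi_definite (uvarov u xi pts) ->
  gauss_borel u S H ->
  gauss_borel (uvarov u xi pts) Sh Hh ->
  forall n : nat, (1 <= n)%N ->
  let M := \matrix_(i < q, j < q) ((i == j)%:R + xi i * Kn1 S H n (pts i) (pts j)) in
  let Prow := \matrix_(r < N D n, i < q) evP S n (pts i) r 0 in
  M \in unitmx /\
  (forall x : 'I_D -> C,
     evP Sh n x =
     Theta_star M (\matrix_(i < q, j < 1) (xi i * Kn1 S H n (pts i) x)) Prow (evP S n x)) /\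
  Hh n = Theta_star M (\matrix_(i < q, r < N D n) (- (xi i * evP S n (pts i) r 0))) Prow (H n).
Proof.
move=> u_lin u_qd _ _ uh_qd uSH uhSH n _ M Prow.
split; first exact: (unitmx_uvarov_mx u_lin u_qd uSH uh_qd n).
split; first exact: (uvarov_pol_Theta u_lin u_qd uSH uh_qd uhSH n).
exact: (uvarov_H_Theta u_lin u_qd uSH uh_qd uhSH n).
Qed.
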